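(* Let $S$ be a monoid with $1\in E\subseteq E(S)$, and let $\cdot:S\times E\to E$ be a function. Then $S$ is a modal left $E$-monoid with left $E$-modal operation $\cdot$ if and only if $E$ is right pre-reduced and for all $e\in E$ and $s,t\in S$: (M1) $e\cdot e=1$; (M2) $s\cdot 1=1$; (M3) $(s\cdot e)s=(s\cdot e)se$; (M4) $(st)\cdot e=s\cdot(t\cdot e)$. Furthermore, $S$ is an inductive left $E$-monoid with associated operation $\cdot$ if and only if (M1)–(M4) hold, $(E,\le_r)$ is a meet-semilattice, and (M5) $s\cdot(e\wedge f)=(s\cdot e)\wedge(s\cdot f)$ for all $s\in S$, $e,f\in E$, where $\wedge$ is the meet in $(E,\le_r)$.
   Context: For a semigroup $S$, $E(S)$ is its set of idempotents; for $e,f\in E(S)$, $e\le_r f$ iff $e=ef$. $E\subseteq E(S)$ is right pre-reduced if $e=ef$ and $f=fe$ imply $e=f$ for $e,f\in E$. Let $S$ be a monoid and $1\in E\subseteq E(S)$. $S$ is a modal left $E$-monoid if $E$ is right pre-reduced and (I1') for all $t\in S$, $e\in E$ there is $t\cdot e\in E$ such that for all $s\in S$: $ste=st$ iff $s(t\cdot e)=s$; the (necessarily unique) resulting map $(t,e)\mapsto t\cdot e$ is the left $E$-modal operation. $S$ is an inductive left $E$-monoid if it is a modal left $E$-monoid, $(E,\le_r)$ is a meet-semilattice with meet $\wedge$, and (I2') for $s\in S$, $e,f\in E$: $se=sf=s$ implies $s(e\wedge f)=s$. *)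

Definition is_monoid {S : Type} (mul : S -> S -> S) (one : S) : Prop :=
  (forall x y z, mul x (mul y z) = mul (mul x y) z) /\
  (forall x, mul one x = x) /\
  (forall x, mul x one = x).

Definition idempotent {S : Type} (mul : S -> S -> S) (e : S) : Prop :=
  mul e e = e.

Definition le_r {S : Type} (mul : S -> S -> S) (e f : S) : Prop :=
  e = mul e f.

Definition right_pre_reduced {S : Type} (mul : S -> S -> S) (E : S -> Prop) : Prop :=
  forall e f, E e -> E f -> e = mul e f -> f = mul f e -> e = f.

Definition E_setting {S : Type} (mul : S -> S -> S) (one : S) (E : S -> Prop) : Prop :=
  E one /\ (forall e, E e -> idempotent mul e).

(* dot : S x E -> E, encoded as a total map S -> S -> S whose values on
   E-arguments lie in E (values at non-E second arguments are irrelevant). *)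
Definition op_into_E {S : Type} (E : S -> Prop) (dot : S -> S -> S) : Prop :=
  forall t e, E e -> E (dot t e).

Definition I1' {S : Type} (mul : S -> S -> S) (E : S -> Prop) (dot : S -> S -> S) : Prop :=
  forall t e, E e ->
    E (dot t e) /\
    (forall s, mul (mul s t) e = mul s t <-> mul s (dot t e) = s).

Definition modal_left_E_monoid {S : Type} (mul : S -> S -> S) (E : S -> Prop)
    (dot : S -> S -> S) : Prop :=
  right_pre_reduced mul E /\ I1' mul E dot.

Definition meet_semilattice_with {S : Type} (mul : S -> S -> S) (E : S -> Prop)
    (meet : S -> S -> S) : Prop :=
  (forall e, E e -> le_r mul e e) /\
  (forall e f g, E e -> E f -> E g -> le_r mul e f -> le_r mul f g -> le_r mul e g) /\
  (forall e f, E e -> E f -> le_r mul e f -> le_r mul f e -> e = f) /\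
  (forall e f, E e -> E f ->
     E (meet e f) /\ le_r mul (meet e f) e /\ le_r mul (meet e f) f /\
     (forall g, E g -> le_r mul g e -> le_r mul g f -> le_r mul g (meet e f))).

Definition I2' {S : Type} (mul : S -> S -> S) (E : S -> Prop) (meet : S -> S -> S) : Prop :=
  forall s e f, E e -> E f -> mul s e = s -> mul s f = s -> mul s (meet e f) = s.

Definition inductive_left_E_monoid {S : Type} (mul : S -> S -> S) (E : S -> Prop)
    (dot meet : S -> S -> S) : Prop :=
  modal_left_E_monoid mul E dot /\ meet_semilattice_with mul E meet /\ I2' mul E meet.

Definition M1 {S : Type} (one : S) (E : S -> Prop) (dot : S -> S -> S) : Prop :=
  forall e, E e -> dot e e = one.
Definition M2 {S : Type} (one : S) (dot : S -> S -> S) : Prop :=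
  forall s, dot s one = one.
Definition M3 {S : Type} (mul : S -> S -> S) (E : S -> Prop) (dot : S -> S -> S) : Prop :=
  forall s e, E e -> mul (dot s e) s = mul (mul (dot s e) s) e.
Definition M4 {S : Type} (mul : S -> S -> S) (E : S -> Prop) (dot : S -> S -> S) : Prop :=
  forall s t e, E e -> dot (mul s t) e = dot s (dot t e).
Definition M5 {S : Type} (E : S -> Prop) (dot meet : S -> S -> S) : Prop :=
  forall s e f, E e -> E f -> dot s (meet e f) = meet (dot s e) (dot s f).

(* The whole argument rests on one observation: in a modal left E-monoid an
   idempotent e of E is determined by its set of right fixers
   {x | x e = x}, because E is right pre-reduced.  Axiom (I1') says exactly
   that the fixers of t.e are the x with x t a fixer of e, so identities
   between values of the modal operation (M4, M5) follow by comparing fixer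
   sets, while M1-M3 are instances of (I1') at special elements.

   Conversely, under M1-M4 an element x is fixed by e iff x.e = 1
   ([fixed_iff_dot_one]); rewriting (I1') through this equivalence reduces it
   to M4, and (I2') reduces in the same way to M5 and 1 /\ 1 = 1. *)

From Stdlib Require Import Setoid.

Section ModalOperation.

Variable S : Type.
Variable mul : S -> S -> S.
Variable one : S.
Variable E : S -> Prop.
Variable dot : S -> S -> S.

Hypothesis mulA : forall x y z, mul x (mul y z) = mul (mul x y) z.
Hypothesis mul1l : forall x, mul one x = x.
Hypothesis mul1r : forall x, mul x one = x.
Hypothesis E_one : E one.
Hypothesis E_idem : forall e, E e -> mul e e = e.
Hypothesis dot_in_E : op_into_E E dot.

(* In a right pre-reduced E, idempotents with the same right fixers coincide:
   each is a fixer of itself, hence of the other. *)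
Lemma eq_of_same_fixers (e f : S) :
  right_pre_reduced mul E -> E e -> E f ->
  (forall x, mul x e = x <-> mul x f = x) -> e = f.
Proof.
  intros Hred He Hf Hfix. apply Hred; auto.
  - symmetry. apply Hfix. apply E_idem, He.
  - symmetry. apply Hfix. apply E_idem, Hf.
Qed.

(* (I1') at s = 1: if t is fixed by e then t.e = 1. *)
Lemma modal_dot_of_fixed (t e : S) :
  I1' mul E dot -> E e -> mul t e = t -> dot t e = one.
Proof.
  intros HI He Ht. destruct (HI t e He) as [_ Hiff].
  rewrite <- (mul1l (dot t e)). apply Hiff. rewrite mul1l. exact Ht.
Qed.

(* (I1') at s = t.e, which is idempotent: this is (M3). *)
Lemma modal_M3 : I1' mul E dot -> M3 mul E dot.
Proof.
  intros HI s e He. destruct (HI s e He) as [Hse Hiff].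
  symmetry. apply Hiff. apply E_idem, Hse.
Qed.

(* The fixers of (st).e and of s.(t.e) are both {x | x s t fixed by e}. *)
Lemma modal_M4 : right_pre_reduced mul E -> I1' mul E dot -> M4 mul E dot.
Proof.
  intros Hred HI s t e He.
  destruct (HI (mul s t) e He) as [Hst Hst_iff].
  destruct (HI t e He) as [Ht Ht_iff].
  destruct (HI s (dot t e) Ht) as [Hs Hs_iff].
  apply eq_of_same_fixers; auto. intro x.
  rewrite <- Hst_iff, <- Hs_iff, <- Ht_iff, !mulA. tauto.
Qed.

Lemma modal_M1_to_M4 :
  modal_left_E_monoid mul E dot ->
  M1 one E dot /\ M2 one dot /\ M3 mul E dot /\ M4 mul E dot.
Proof.
  intros [Hred HI]. repeat split.
  - intros e He. apply modal_dot_of_fixed; auto.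
  - intro s. apply modal_dot_of_fixed; auto.
  - apply modal_M3; auto.
  - apply modal_M4; auto.
Qed.

(* Under (M1)-(M4), the fixers of e are exactly the x with x.e = 1:
   x = x e gives x.e = x.(e.e) = x.1 = 1 by M4, M1, M2, and conversely
   x.e = 1 turns (M3) into x = x e. *)
Lemma fixed_iff_dot_one (x e : S) :
  M1 one E dot -> M2 one dot -> M3 mul E dot -> M4 mul E dot -> E e ->
  (mul x e = x <-> dot x e = one).
Proof.
  intros H1 H2 H3 H4 He. split.
  - intro Hx. rewrite <- Hx, H4, H1 by exact He. apply H2.
  - intro Hx. pose proof (H3 x e He) as H3x.
    rewrite Hx, !mul1l in H3x. symmetry. exact H3x.
Qed.

(* (M1)-(M4) imply (I1'): both sides of (I1') say (st).e = 1, by M4. *)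
Lemma M1_to_M4_I1' :
  M1 one E dot -> M2 one dot -> M3 mul E dot -> M4 mul E dot -> I1' mul E dot.
Proof.
  intros H1 H2 H3 H4 t e He. split; [apply dot_in_E, He |]. intro s.
  rewrite (fixed_iff_dot_one (mul s t) e), (fixed_iff_dot_one s (dot t e)),
    H4 by auto.
  reflexivity.
Qed.

Section Meet.

Variable meet : S -> S -> S.
Hypothesis Hmeet : meet_semilattice_with mul E meet.

(* In the presence of (I2'), the fixers of g /\ h are the common fixers of
   g and h (the converse inclusion holds since g /\ h <=_r g, h). *)
Lemma fixed_by_meet_iff (x g h : S) :
  I2' mul E meet -> E g -> E h ->
  (mul x (meet g h) = x <-> mul x g = x /\ mul x h = x).
Proof.
  intros HI2 Hg Hh.
  destruct Hmeet as [_ [_ [_ Hglb]]].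
  destruct (Hglb g h Hg Hh) as [_ [Hleg [Hleh _]]].
  split.
  - intro Hx. rewrite <- Hx, <- !mulA, <- Hleg, <- Hleh. auto.
  - intros [Hxg Hxh]. apply HI2; auto.
Qed.

(* In an inductive left E-monoid, (M5) holds: both sides have as fixers the x
   with x s fixed by e and by f. *)
Lemma inductive_M5 :
  right_pre_reduced mul E -> I1' mul E dot -> I2' mul E meet ->
  M5 E dot meet.
Proof.
  intros Hred HI HI2 s e f He Hf.
  destruct Hmeet as [_ [_ [_ Hglb]]].
  destruct (Hglb e f He Hf) as [Hef _].
  destruct (HI s e He) as [Hse Hse_iff].
  destruct (HI s f Hf) as [Hsf Hsf_iff].
  destruct (HI s (meet e f) Hef) as [Hsef Hsef_iff].
  destruct (Hglb (dot s e) (dot s f) Hse Hsf) as [Hm _].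
  apply eq_of_same_fixers; auto. intro x.
  rewrite <- Hsef_iff, !fixed_by_meet_iff, <- Hse_iff, <- Hsf_iff by auto.
  reflexivity.
Qed.

Lemma meet_idem (e : S) : E e -> meet e e = e.
Proof.
  intro He. destruct Hmeet as [Hrefl [_ [Hanti Hglb]]].
  destruct (Hglb e e He He) as [Hee [Hle [_ Hgreatest]]].
  apply Hanti; auto.
Qed.

(* (M1)-(M5) imply (I2'): if s e = s = s f then s.(e /\ f) = 1 /\ 1 = 1. *)
Lemma M1_to_M5_I2' :
  M1 one E dot -> M2 one dot -> M3 mul E dot -> M4 mul E dot ->
  M5 E dot meet -> I2' mul E meet.
Proof.
  intros H1 H2 H3 H4 H5 s e f He Hf Hse Hsf.
  destruct Hmeet as [_ [_ [_ Hglb]]].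
  destruct (Hglb e f He Hf) as [Hef _].
  apply (fixed_iff_dot_one s (meet e f)); auto.
  rewrite H5 by auto.
  rewrite (proj1 (fixed_iff_dot_one s e H1 H2 H3 H4 He) Hse),
    (proj1 (fixed_iff_dot_one s f H1 H2 H3 H4 Hf) Hsf).
  apply meet_idem, E_one.
Qed.

(* Antisymmetry of <=_r on E is right pre-reducedness. *)
Lemma semilattice_right_pre_reduced : right_pre_reduced mul E.
Proof.
  destruct Hmeet as [_ [_ [Hanti _]]]. intros e f He Hf Hef Hfe. auto.
Qed.

End Meet.

End ModalOperation.

Theorem proposition5p4 (S : Type) (mul : S -> S -> S) (one : S)
    (E : S -> Prop) (dot : S -> S -> S)
    (Hmon : is_monoid mul one) (HE : E_setting mul one E)
    (Hdot : op_into_E E dot) :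
  (modal_left_E_monoid mul E dot <->
     right_pre_reduced mul E /\ M1 one E dot /\ M2 one dot /\ M3 mul E dot /\ M4 mul E dot)
  /\
  (forall meet : S -> S -> S,
     inductive_left_E_monoid mul E dot meet <->
       M1 one E dot /\ M2 one dot /\ M3 mul E dot /\ M4 mul E dot /\
       meet_semilattice_with mul E meet /\ M5 E dot meet).
Proof.
  destruct Hmon as [mulA [mul1l mul1r]]. destruct HE as [E_one E_idem].
  split.
  - split.
    + intro Hmod. split; [apply Hmod |].
      apply modal_M1_to_M4; auto.
    + intros [Hred [H1 [H2 [H3 H4]]]]. split; auto.
      apply M1_to_M4_I1' with (one := one); auto.
  - intro meet. split.
    + intros [Hmod [Hmeet HI2]].
      assert (HM : M1 one E dot /\ M2 one dot /\ M3 mul E dot /\ M4 mul E dot)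
        by (apply modal_M1_to_M4; auto).
      destruct HM as [H1 [H2 [H3 H4]]].
      destruct Hmod as [Hred HI].
      do 5 (split; [assumption |]).
      eapply inductive_M5; eauto.
    + intros [H1 [H2 [H3 [H4 [Hmeet H5]]]]].
      split; [split |split]; auto.
      * exact (semilattice_right_pre_reduced _ _ _ _ Hmeet).
      * apply M1_to_M4_I1' with (one := one); auto.
      * eapply M1_to_M5_I2'; eauto.
Qed.
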